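(* Let $\widetilde{\mathbb{F}}$ be a field of characteristic $p>2$, and $\mathbb{F}$ a field algebraic over $\mathbb{F}_p$. Let $f:\mathbb{F}\to\widetilde{\mathbb{F}}$ be an SD-map. Then $f$ is a field homomorphism of $\mathbb{F}$ onto its image, except when $\mathbb{F}=\mathbb{F}_5$, in which case $f$ can alternatively be only the map $w\mapsto w^3$ (with $\mathbb{F}_5$ identified with the prime subfield of $\widetilde{\mathbb{F}}$).
   Context: $\mathbb{F}_p$ denotes the field with $p$ elements. A map $f:\mathbb{F}\to\widetilde{\mathbb{F}}$ between fields is called an SD-map if for all $x\neq y$ in $\mathbb{F}$ one has $f(x)\neq f(y)$ and \[ f\left(\frac{x+y}{x-y}\right)=\frac{f(x)+f(y)}{f(x)-f(y)}. \] *)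

From mathcomp Require Import all_boot all_order all_algebra.
Set Implicit Arguments. Unset Strict Implicit. Unset Printing Implicit Defensive.
Import GRing.Theory.
Local Open Scope ring_scope.

Definition SD_map (F Ft : fieldType) (f : F -> Ft) : Prop :=
  forall x y : F, x != y ->
    f x != f y /\ f ((x + y) / (x - y)) = (f x + f y) / (f x - f y).

Definition algebraic_over_Fp (p : nat) (F : fieldType) : Prop :=
  p \in [pchar F] /\
  forall x : F, exists q : {poly 'F_p},
    q != 0 /\ root (map_poly (fun c : 'F_p => (nat_of_ord c)%:R : F) q) x.

Definition field_hom (F Ft : fieldType) (f : F -> Ft) : Prop :=
  (forall x y, f (x + y) = f x + f y) /\
  (forall x y, f (x * y) = f x * f y) /\
  f 1 = 1.

Definition is_F5 (F : fieldType) : Prop :=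
  5%N \in [pchar F] /\ forall x : F, exists n : nat, x = n%:R.

(* Write c = f 2.  An SD-map between fields in which 2 is invertible is injective,
   fixes 0 and +-1, and is multiplicative, so the defining identity at (s, a) becomes
   f (s + a) (f s - f a) = f (s - a) (f s + f a).  With a = 1 at s = 2, 4, 5 this
   forces (c - 2) (c^2 + 1) = 0, so in characteristic p > 2 either c = 2, or p = 5
   and c = -2.  Combining the identities for a = 1, 2 around t shows that f (t + 1)
   is a root of c (f t - 1) X^2 - 2 (f t)^2 X + c (f t + 1).
   For c = 2 the roots are f t + 1 and 1 / (f t - 1); the same dichotomy at t - 1
   rules out the second one, except when f t is a primitive cube root of unity, and
   then so is t and f (t + 1) = f (- t^2) = f t + 1 anyway.  Hence f is additive.
   For c = -2, f (t + 1) = -1 / (f t - 1) whenever t is not 0 or +-1.  This Moebius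
   map has order 3, so t, t + 1, t + 2 cannot all avoid {0, 1, -1} (that would give
   f (t + 3) = f t, i.e. 3 = 0); thus F is the prime field F_5, on which f is the cube
   map. *)

From mathcomp Require Import all_boot all_order all_algebra.
From mathcomp.algebra_tactics Require Import ring.
Import GRing.Theory.
Local Open Scope ring_scope.

Lemma natr_pchar_opp {R : nzRingType} {p m n : nat} :
  p \in [pchar R] -> (p %| m + n)%N -> m%:R = - n%:R :> R.
Proof. by move=> pR dvd_p; apply/eqP; rewrite -subr_eq0 opprK -natrD -(dvdn_pcharf pR). Qed.

Lemma intr_pchar_natr {R : nzRingType} {p : nat} (z : int) :
  p \in [pchar R] -> exists n : nat, z%:~R = n%:R :> R.
Proof.
move=> pR; case: z => n; first by exists n.
exists (p.-1 * n.+1)%N; rewrite NegzE intrN (natr_pchar_opp pR (n := n.+1)) //.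
by rewrite addnC -mulSn prednK ?dvdn_mulr ?prime_gt0 ?(pcharf_prime pR).
Qed.

Section SDMap.

Context {F Ft : fieldType} {f : F -> Ft}.

Hypothesis sdf : SD_map f.
Hypotheses (two_F : (2 : F) != 0) (two_Ft : (2 : Ft) != 0).

Lemma sdmap_inj : injective f.
Proof. by move=> x y fxy; apply/eqP/negPn/negP => /sdf[]; rewrite fxy eqxx. Qed.

Lemma sdmap_at0 x : x != 0 -> f x * (f 1 - 1) = f 0 * (f 1 + 1).
Proof.
move=> x0; have [fx_neq_f0 +] := sdf _ _ x0.
rewrite addr0 subr0 divff // => ->.
by field; rewrite subr_eq0.
Qed.

Lemma sdmap1 : f 1 = 1.
Proof.
have one_neqN1 : (1 : F) != -1 by rewrite -addr_eq0.
have [f1_neq_fN1 _] := sdf _ _ one_neqN1.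
have : (f 1 - f (-1)) * (f 1 - 1) = 0.
  by rewrite mulrBl sdmap_at0 ?oner_eq0 // sdmap_at0 ?oppr_eq0 ?oner_eq0 // subrr.
by move/eqP; rewrite mulf_eq0 !subr_eq0 (negbTE f1_neq_fN1) => /eqP.
Qed.

Lemma sdmap0 : f 0 = 0.
Proof.
have := sdmap_at0 1 (oner_neq0 F); rewrite sdmap1 subrr mulr0 => /esym/eqP.
by rewrite mulf_eq0 (negbTE two_Ft) orbF => /eqP.
Qed.

Lemma sdmapN1 : f (-1) = -1.
Proof.
have zero_neq1 : (0 : F) != 1 by rewrite eq_sym oner_neq0.
have [_] := sdf _ _ zero_neq1.
by rewrite add0r sub0r sdmap0 sdmap1 add0r sub0r !invrN !invr1 !mul1r.
Qed.

Lemma sdmap_eq0 x : (f x == 0) = (x == 0).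
Proof. by rewrite -sdmap0 (inj_eq sdmap_inj). Qed.

Lemma sdmapM x y : f (x * y) = f x * f y.
Proof.
have [->|x0] := eqVneq x 0; first by rewrite mul0r sdmap0 mul0r.
have [->|y1] := eqVneq y 1; first by rewrite mulr1 sdmap1 mulr1.
have x_neq_xy : x != x * y by rewrite -{1}[x]mulr1 (inj_eq (mulfI x0)) eq_sym.
have one_neq_y : (1 : F) != y by rewrite eq_sym.
have [fx_neq_fxy Exy] := sdf _ _ x_neq_xy; have [f1_neq_fy Ey] := sdf _ _ one_neq_y.
have xy_ratio : (x + x * y) / (x - x * y) = (1 + y) / (1 - y).
  by field; rewrite !subr_eq0 one_neq_y x_neq_xy.
rewrite sdmap1 in f1_neq_fy Ey.
move/eqP: Exy; rewrite xy_ratio Ey eqr_div ?subr_eq0 // => /eqP cross.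
have /eqP : 2 * (f (x * y) - f x * f y) = 0.
  rewrite -[RHS](subrr ((1 + f y) * (f x - f (x * y)))) {1}cross; ring.
by rewrite mulf_eq0 (negbTE two_Ft) subr_eq0 => /eqP.
Qed.

Lemma sdmapV x : f x^-1 = (f x)^-1.
Proof.
have [->|x0] := eqVneq x 0; first by rewrite invr0 sdmap0 invr0.
have fx0 : f x != 0 by rewrite sdmap_eq0.
by apply: (mulfI fx0); rewrite -sdmapM !divff // sdmap1.
Qed.

Lemma sdmapN x : f (- x) = - f x.
Proof. by rewrite -mulN1r sdmapM sdmapN1 mulN1r. Qed.

Lemma sdmap_sum_diff s a : f (s + a) * (f s - f a) = f (s - a) * (f s + f a).
Proof.
have [->|s_neq_a] := eqVneq s a; first by rewrite !subrr sdmap0 mul0r mulr0.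
have [fs_neq_fa] := sdf _ _ s_neq_a; rewrite sdmapM sdmapV => E.
have fsa0 : f (s - a) != 0 by rewrite sdmap_eq0 subr_eq0.
rewrite (_ : f (s + a) = (f s + f a) / (f s - f a) * f (s - a)); last by rewrite -E; field.
by field; rewrite subr_eq0.
Qed.

Lemma sdmap_natS m : f m.+2%:R * (f m.+1%:R - 1) = f m%:R * (f m.+1%:R + 1).
Proof.
have := sdmap_sum_diff m.+1%:R 1.
by rewrite sdmap1 natr1 -[in m.+1%:R - 1]natr1 addrK.
Qed.

Lemma sdmap2_cases : (3 : F) != 0 -> f 2 = 2 \/ f 2 ^+ 2 = -1 /\ (5 : F) = 0.
Proof.
move=> three_F.
have f4 : f 4 = f 2 ^+ 2 by rewrite expr2 -sdmapM -natrM.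
have f6 : f 6 = f 2 * f 3 by rewrite -sdmapM -natrM.
have c0 : f 2 != 0 by rewrite sdmap_eq0.
have c1 : f 2 - 1 != 0.
  by rewrite subr_eq0 -sdmap1 (inj_eq sdmap_inj) -subr_eq0 -[2]/(1 + 1 : F) addrK oner_eq0.
have c21 : f 2 ^+ 2 - 1 != 0.
  rewrite -f4 subr_eq0 -sdmap1 (inj_eq sdmap_inj) -subr_eq0.
  by rewrite (_ : 4 - 1 = 3 :> F) //; ring.
have E1 := sdmap_natS 1; have E3 := sdmap_natS 3; have E4 := sdmap_natS 4.
rewrite sdmap1 mul1r in E1; rewrite f4 in E3; rewrite f6 f4 in E4.
have f3E : f 3 = (f 2 + 1) / (f 2 - 1) by rewrite -E1; field.
have f5E : f 5 = f 3 * (f 2 ^+ 2 + 1) / (f 2 ^+ 2 - 1) by rewrite -E3; field.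
have : - 2 * f 2 ^+ 2 * ((f 2 - 2) * (f 2 ^+ 2 + 1)) / (f 2 - 1) ^+ 3 = 0.
  rewrite -[RHS](subrr (f 2 ^+ 2 * (f 5 + 1))) -{1}E4 f5E f3E.
  by field; rewrite c1 c21.
move/eqP; rewrite !mulf_eq0 invr_eq0 expf_eq0 (negbTE c1) (negbTE c0) oppr_eq0.
rewrite (negbTE two_Ft) andbF !orbF /= => /orP[|/eqP c2].
  by rewrite subr_eq0 => /eqP; left.
right; split; first by apply/eqP; rewrite -addr_eq0 c2.
by apply: sdmap_inj; rewrite sdmap0 f5E c2 mulr0 mul0r.
Qed.

Lemma sdmap2_pchar {p : nat} : p \in [pchar F] -> p \in [pchar Ft] ->
  f 2 = 2 \/ p = 5%N /\ f 2 = -2.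
Proof.
move=> pF pFt; have p_prime := pcharf_prime pF.
have [p3|p_neq3] := eqVneq p 3%N.
  rewrite p3 in pF pFt; left.
  rewrite (natr_pchar_opp pF (_ : 3 %| 2 + 1)%N) //.
  by rewrite (natr_pchar_opp pFt (_ : 3 %| 2 + 1)%N) // sdmapN1.
have three_F : (3 : F) != 0 by rewrite -(dvdn_pcharf pF) dvdn_prime2.
have [f2|[f2_sqr F5]] := sdmap2_cases three_F; first by left.
have p5 : p = 5%N by apply/eqP; rewrite -dvdn_prime2 // (dvdn_pcharf pF) F5.
rewrite p5 in pFt.
have /eqP : (f 2 - 2) * (f 2 + 2) = 0.
  rewrite -subr_sqr (_ : f 2 ^+ 2 - 2 ^+ 2 = f 2 ^+ 2 + 1 - 5); last by ring.
  by rewrite f2_sqr addNr (pcharf0 pFt) subr0.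
by rewrite mulf_eq0 subr_eq0 addr_eq0 => /orP[/eqP|/eqP]; [left | right].
Qed.

Lemma sdmap_succ_quadratic t : t != 0 -> t != -1 ->
  f 2 * (f t - 1) * f (t + 1) ^+ 2 - 2 * f t ^+ 2 * f (t + 1) + f 2 * (f t + 1) = 0.
Proof.
move=> t0 tN1.
have R1 := sdmap_sum_diff t 1; have R2 := sdmap_sum_diff t 2.
have R3 := sdmap_sum_diff (t + 1) 1; have R4 := sdmap_sum_diff (t - 1) 1.
rewrite (_ : t + 1 + 1 = t + 2) ?addrK in R3; last by ring.
rewrite (_ : t - 1 - 1 = t - 2) ?subrK in R4; last by ring.
rewrite sdmap1 in R1 R3 R4.
have ft0 : f t != 0 by rewrite sdmap_eq0.
have ft1 : f t + 1 != 0 by rewrite addr_eq0 -sdmapN1 (inj_eq sdmap_inj).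
have fs1 : f (t + 1) - 1 != 0.
  by rewrite subr_eq0 -sdmap1 (inj_eq sdmap_inj) -subr_eq0 addrK.
have fp1 : f (t - 1) + 1 != 0.
  by rewrite addr_eq0 -sdmapN1 (inj_eq sdmap_inj) -subr_eq0 opprK subrK.
move: R1 R2 R3 R4 ft0 ft1 fs1 fp1.
move: (f t) (f (t + 1)) (f (t - 1)) (f (t + 2)) (f (t - 2)) (f 2).
move=> u a b C D c R1 R2 R3 R4 u0 u1 a1 b1.
have eb : b = a * (u - 1) / (u + 1) by rewrite R1; field.
have eC : C = u * (a + 1) / (a - 1) by rewrite -R3; field.
have eD : D = u * (b - 1) / (b + 1) by rewrite R4; field.
have hab : a * (u - 1) + (u + 1) != 0.
  by rewrite (_ : _ + _ = (b + 1) * (u + 1)) ?mulf_neq0 // eb; field.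
have : - 2 * u * (c * (u - 1) * a ^+ 2 - 2 * u ^+ 2 * a + c * (u + 1))
         / ((a - 1) * (a * (u - 1) + (u + 1))) = 0.
  by rewrite -[RHS](subrr (D * (u + c))) -{1}R2 eD eb eC; field; rewrite hab a1 u1.
move/eqP; rewrite !mulf_eq0 invr_eq0 !mulf_eq0 oppr_eq0.
by rewrite (negbTE two_Ft) (negbTE u0) (negbTE a1) (negbTE hab) /= orbF => /eqP.
Qed.

Lemma sdmap_succ_cases e t : e ^+ 2 = 1 -> f 2 = 2 * e -> t != 0 -> t != -1 ->
  f (t + 1) = e * (f t + 1) \/ (f t - 1) * f (t + 1) = e.
Proof.
move=> e2 f2 t0 tN1; have := sdmap_succ_quadratic t t0 tN1; rewrite f2.
move: (f t) (f (t + 1)) => u a Q.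
have /eqP : 2 * e * ((a - e * (u + 1)) * ((u - 1) * a - e)) = 0.
  rewrite (_ : _ * _ = 2 * e * (u - 1) * a ^+ 2 - 2 * u ^+ 2 * a + 2 * e * (u + 1)
                       + (e ^+ 2 - 1) * (2 * e * (u + 1) - 2 * u ^+ 2 * a)); last by ring.
  by rewrite Q e2 subrr mul0r addr0.
rewrite !mulf_eq0 (negbTE two_Ft) /= !subr_eq0 => /or3P[/eqP e0|/eqP|/eqP]; [|by left|by right].
by move: e2; rewrite e0 expr0n => /eqP; rewrite eq_sym oner_eq0.
Qed.

Lemma sdmap_succ_cube_root t :
  t != 1 -> f t ^+ 2 + f t + 1 = 0 -> f (t + 1) = f t + 1.
Proof.
move=> t1 ft_root.
have cube_factor (R : comPzRingType) (x : R) : x ^+ 3 - 1 = (x - 1) * (x ^+ 2 + x + 1).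
  by ring.
have ft3 : f t ^+ 3 = 1 by apply/eqP; rewrite -subr_eq0 cube_factor ft_root mulr0.
have t3 : t ^+ 3 = 1 by apply: sdmap_inj; rewrite sdmap1 -ft3 !exprS expr0 !mulr1 !sdmapM.
have t_root : t ^+ 2 + t + 1 = 0.
  have /eqP : (t - 1) * (t ^+ 2 + t + 1) = 0 by rewrite -cube_factor t3 subrr.
  by rewrite mulf_eq0 subr_eq0 (negbTE t1) => /eqP.
rewrite (_ : t + 1 = - t ^+ 2); last by rewrite -[RHS]addr0 -t_root; ring.
by rewrite sdmapN expr2 sdmapM -expr2 -[LHS]addr0 -ft_root; ring.
Qed.

Lemma sdmap_succ : f 2 = 2 -> forall t, f (t + 1) = f t + 1.
Proof.
move=> f2 t.
have [->|t0] := eqVneq t 0; first by rewrite add0r sdmap1 sdmap0 add0r.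
have [->|t1] := eqVneq t 1; first by rewrite f2 sdmap1.
have [->|tN1] := eqVneq t (-1); first by rewrite addNr sdmap0 sdmapN1 addNr.
have one2 : (1 : Ft) ^+ 2 = 1 by rewrite expr1n.
have f2_1 : f 2 = 2 * 1 by rewrite mulr1.
have s0 : t - 1 != 0 by rewrite subr_eq0.
have sN1 : t - 1 != -1 by rewrite -subr_eq0 opprK subrK.
have ft1 : f t - 1 != 0 by rewrite subr_eq0 -sdmap1 (inj_eq sdmap_inj).
have R := sdmap_sum_diff t 1; rewrite sdmap1 in R.
have [|Ea] := sdmap_succ_cases 1 t one2 f2_1 t0 tN1; first by rewrite mul1r.
have Eb : f (t - 1) * (f t + 1) = 1 by rewrite -R mulrC Ea.
have := sdmap_succ_cases 1 (t - 1) one2 f2_1 s0 sN1; rewrite subrK mul1r => -[Eu|Eu].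
  by apply: (mulfI ft1); rewrite mulrC R Eu addrK.
apply: sdmap_succ_cube_root => //.
have /eqP : f (t - 1) + f t = 0.
  have -> : f (t - 1) + f t = f (t - 1) * (f t + 1) - (f (t - 1) - 1) * f t by ring.
  by rewrite Eb Eu subrr.
rewrite addr_eq0 => /eqP fp; rewrite fp in Eu.
have -> : f t ^+ 2 + f t + 1 = 1 - (- f t - 1) * f t by ring.
by rewrite Eu subrr.
Qed.

Lemma sdmapD : f 2 = 2 -> forall x y, f (x + y) = f x + f y.
Proof.
move=> f2 x y; have [->|y0] := eqVneq y 0; first by rewrite sdmap0 !addr0.
have fy0 : f y != 0 by rewrite sdmap_eq0.
rewrite (_ : x + y = y * (x / y + 1)); last by field.
by rewrite sdmapM sdmap_succ // sdmapM sdmapV; field.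
Qed.

Lemma sdmap_field_hom : f 2 = 2 -> field_hom f.
Proof. by move=> f2; split; [exact: sdmapD | split; [exact: sdmapM | exact: sdmap1]]. Qed.

Lemma sdmap_succ_neg2 t : f 2 = -2 -> t \notin [:: 0; 1; -1] ->
  (f t - 1) * f (t + 1) = -1.
Proof.
move=> f2; rewrite !inE !negb_or => /and3P[t0 t1 tN1].
have sqrN1 : (-1 : Ft) ^+ 2 = 1 by rewrite sqrrN expr1n.
have f2_N1 : f 2 = 2 * -1 by rewrite mulrN1.
have [Ea|//] := sdmap_succ_cases (-1) t sqrN1 f2_N1 t0 tN1; exfalso.
have s0 : t - 1 != 0 by rewrite subr_eq0.
have sN1 : t - 1 != -1 by rewrite -subr_eq0 opprK subrK.
have ft1 : f t + 1 != 0 by rewrite addr_eq0 -sdmapN1 (inj_eq sdmap_inj).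
have Eb : f (t - 1) = 1 - f t.
  have R := sdmap_sum_diff t 1; rewrite sdmap1 Ea in R.
  by apply: (mulIf ft1); rewrite -R; ring.
have := sdmap_succ_cases (-1) (t - 1) sqrN1 f2_N1 s0 sN1; rewrite subrK Eb => -[Eu|Eu].
  by move/eqP: two_Ft; apply; rewrite -(subrr (f t)) {2}Eu; ring.
have /eqP : f t ^+ 2 = 1 by rewrite -[RHS]opprK -Eu; ring.
rewrite sqrf_eq1 -sdmapN1 -sdmap1 !(inj_eq sdmap_inj).
by rewrite (negbTE t1) (negbTE tN1).
Qed.

Lemma sdmap_neg2_period3 t : f 2 = -2 ->
  t \notin [:: 0; 1; -1] -> t + 1 \notin [:: 0; 1; -1] -> t + 2 \notin [:: 0; 1; -1] ->
  f (t + 3) = f t.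
Proof.
move=> f2 S0 S1 S2.
have E0 := sdmap_succ_neg2 _ f2 S0; have E1 := sdmap_succ_neg2 _ f2 S1.
have E2 := sdmap_succ_neg2 _ f2 S2.
rewrite (_ : t + 1 + 1 = t + 2) in E1; last by ring.
rewrite (_ : t + 2 + 1 = t + 3) in E2; last by ring.
have ft0 : f t != 0 by rewrite sdmap_eq0; move: S0; rewrite !inE; case: eqP.
move: E2 E1 E0 ft0; move: (f (t + 3)) (f (t + 2)) (f (t + 1)) (f t).
move=> v3 v2 v1 v0 E2 E1 E0 v0_neq0.
have step (v w : Ft) : (v - 1) * w = -1 -> v - 1 != 0 /\ w = - (v - 1)^-1.
  move=> E; have v_neq1 : v - 1 != 0.
    by apply: contra_eq_neq E => ->; rewrite mul0r eq_sym oppr_eq0 oner_neq0.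
  by split=> //; apply: (mulfI v_neq1); rewrite E mulrN divff.
have [_ ->] := step _ _ E2; have [_ ->] := step _ _ E1; have [v0_neq1 ->] := step _ _ E0.
field.
have -> : -1 + -1 * (v0 - 1) = - v0 by ring.
have -> : - (v0 - 1) + -1 * (- v0) = 1 by ring.
by rewrite v0_neq1 oppr_eq0 v0_neq0 oner_neq0.
Qed.

Lemma sdmap_neg2_intr : (3 : F) != 0 -> f 2 = -2 -> forall t : F, exists z : int, t = z%:~R.
Proof.
move=> three_F f2 t.
have intr_shift (k : nat) : t + k%:R \in [:: 0; 1; -1] -> exists z : int, t = z%:~R.
  rewrite !inE => /or3P[] /eqP tk; [exists (- k%:Z) | exists (1 - k%:Z) | exists (-1 - k%:Z)];
    by apply: (addIr k%:R); rewrite tk ?intrN ?intrB ?subrK ?addNr.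
have [S0|S0] := boolP (t \in [:: 0; 1; -1]); first by apply: (intr_shift 0); rewrite addr0.
have [S1|S1] := boolP (t + 1 \in [:: 0; 1; -1]); first exact: intr_shift 1 S1.
have [S2|S2] := boolP (t + 2 \in [:: 0; 1; -1]); first exact: intr_shift 2 S2.
move/sdmap_inj/eqP: (sdmap_neg2_period3 t f2 S0 S1 S2).
by rewrite -subr_eq0 addrAC subrr add0r (negbTE three_F).
Qed.


Lemma sdmap_neg2_is_F5 : 5%N \in [pchar F] -> f 2 = -2 -> is_F5 F.
Proof.
move=> F5 f2; split=> // x.
have three_F : (3 : F) != 0 by rewrite -(dvdn_pcharf F5).
have [z ->] := sdmap_neg2_intr three_F f2 x.
exact: intr_pchar_natr z F5.
Qed.

Lemma sdmap_neg2_cube : 5%N \in [pchar F] -> 5%N \in [pchar Ft] -> f 2 = -2 ->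
  forall n : nat, f n%:R = n%:R ^+ 3.
Proof.
move=> F5 Ft5 f2 n; rewrite -(GRing.natr_mod_pchar F5) -(GRing.natr_mod_pchar Ft5).
have cube2 : (2 : Ft) ^+ 3 = -2 by rewrite -natrX (natr_pchar_opp Ft5 (_ : 5 %| 2 ^ 3 + 2)%N).
have : (n %% 5 < 5)%N by rewrite ltn_mod.
case: (n %% 5)%N => [|[|[|[|[|//]]]]] _.
- by rewrite sdmap0 expr0n.
- by rewrite sdmap1 expr1n.
- by rewrite f2 cube2.
- rewrite (natr_pchar_opp F5 (_ : 5 %| 3 + 2)%N) // (natr_pchar_opp Ft5 (_ : 5 %| 3 + 2)%N) //.
  have cubeN2 : (-2 : Ft) ^+ 3 = - 2 ^+ 3 by ring.
  by rewrite sdmapN f2 opprK cubeN2 cube2 opprK.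
- rewrite (natr_pchar_opp F5 (_ : 5 %| 4 + 1)%N) // (natr_pchar_opp Ft5 (_ : 5 %| 4 + 1)%N) //.
  by rewrite sdmapN1; ring.
Qed.

End SDMap.

Theorem theorem3p3 (p : nat) (F Ft : fieldType) (f : F -> Ft) :
  prime p -> (2 < p)%N -> p \in [pchar Ft] -> algebraic_over_Fp p F ->
  SD_map f ->
  field_hom f \/
  (is_F5 F /\ forall n : nat, f n%:R = (n%:R : Ft) ^+ 3).
Proof.
move=> _ p_gt2 pFt [pF _] sdf.
have two_neq0 (R : nzRingType) : p \in [pchar R] -> (2 : R) != 0.
  by move=> pR; rewrite -(dvdn_pcharf pR) gtnNdvd.
have two_F := two_neq0 _ pF; have two_Ft := two_neq0 _ pFt.
have [f2|[p5 f2]] := sdmap2_pchar sdf two_F two_Ft pF pFt.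
  by left; apply: sdmap_field_hom sdf two_F two_Ft f2.
rewrite p5 in pF pFt; right.
split; first exact: sdmap_neg2_is_F5 sdf two_F two_Ft pF f2.
exact: sdmap_neg2_cube sdf two_F two_Ft pF pFt f2.
Qed.
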